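(* Let $0<e_0\le 1$ be a constant. If an algorithm is an $\alpha$-approximation algorithm for the classical problem $P_m\mid\mid C_{\max}$, then using the schedule it produces (the same assignment of jobs to machines and the same order of jobs on each machine, processed without unnecessary idle time) yields an $\tfrac{\alpha}{e_0}$-approximation algorithm for $P_m, e_{i,k}\ge e_0\mid\mid C_{\max}$.
   Context: Shared-processing parallel machine scheduling: there are $m$ identical machines $M_1,\dots,M_m$ and $n$ primary jobs, all available at time $0$, job $j$ having processing time $p_j>0$. Each job is processed by exactly one machine without interruption; each machine processes its jobs one after another. The time axis of machine $M_i$ is partitioned into consecutive intervals $(0,t_{i,1}],(t_{i,1},t_{i,2}],\dots$ with sharing ratios $e_{i,k}\in(0,1]$; during the $k$-th interval $M_i$ processes primary work at rate $e_{i,k}$ (so a job of length $p$ started at time $s$ completes at the earliest $C$ with $\int_s^C(\text{rate of }M_i)\,dt=p$). The makespan is $C_{\max}=\max_j C_j$. $P_m, e_{i,k}\ge e_0\mid\mid C_{\max}$ denotes makespan minimization when all sharing ratios on all machines satisfy $e_{i,k}\ge e_0$. $P_m\mid\mid C_{\max}$ is the classical problem where all ratios equal $1$. *)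

From Stdlib Require Import Reals List Permutation.
From Coquelicot Require Import Coquelicot.
Open Scope R_scope.

Definition sharing_profile (e0 : R) (rate : R -> R) : Prop :=
  exists (t e : nat -> R),
    t O = 0 /\
    (forall k, t k < t (S k)) /\
    (forall M, exists k, M < t k) /\
    (forall k, 0 < e k <= 1 /\ e0 <= e k) /\
    (forall k x, t k < x <= t (S k) -> rate x = e k).

Definition classical_rate : R -> R := fun _ => 1.

Definition completes (rate : R -> R) (s p C : R) : Prop :=
  s <= C /\ RInt rate s C = p /\
  (forall C', s <= C' -> RInt rate s C' = p -> C <= C').

Fixpoint chain (noidle : bool) (rate : R -> R) (p S C : nat -> R)
    (prev : R) (l : list nat) : Prop :=
  match l with
  | nil => True
  | j :: l' =>
      (if noidle then S j = prev else prev <= S j) /\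
      completes rate (S j) (p j) (C j) /\
      chain noidle rate p S C (C j) l'
  end.

Definition assignment (m n : nat) (asg : list (list nat)) : Prop :=
  length asg = m /\ Permutation (concat asg) (seq 0 n).

Definition schedule (noidle : bool) (m n : nat) (p : nat -> R)
    (rates : nat -> R -> R) (asg : list (list nat)) (S C : nat -> R) : Prop :=
  assignment m n asg /\
  forall i, (i < m)%nat -> chain noidle (rates i) p S C 0 (nth i asg nil).

Definition makespan (n : nat) (C : nat -> R) : R :=
  fold_right Rmax 0 (map C (seq 0 n)).

(* A machine whose rate stays in [e0, 1] needs between p and p / e0 time units
   to process work p.  So the algorithm's assignment, run without idle time
   under sharing, ends within 1/e0 times its largest machine load, which is the
   classical makespan of that assignment.  That is at most alpha times the
   classical no-idle makespan of any competing assignment, i.e. its largest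
   load, and no schedule of that assignment under sharing beats its largest
   load, since rates never exceed 1. *)

From Stdlib Require Import Reals List Permutation Lra Lia.
From Coquelicot Require Import Coquelicot.
Open Scope R_scope.

Lemma last_cons_shift {A : Type} (a d : A) (l : list A) : last (a :: l) d = last l a.
Proof.
  revert a d; induction l as [|b l IH]; intros a d; [reflexivity|].
  change (last (b :: l) d = last (b :: l) a); rewrite !IH; reflexivity.
Qed.

Lemma last_In_cons {A : Type} (d : A) (l : list A) : In (last l d) (d :: l).
Proof.
  revert d; induction l as [|a l IH]; intros d; [now left|].
  rewrite last_cons_shift; right; apply IH.
Qed.

Lemma NoDup_app_notin_l {A : Type} (l l' : list A) (x : A) :
  NoDup (l ++ l') -> In x l' -> ~ In x l.
Proof.
  induction l as [|a l IH]; simpl; [tauto|].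
  intros Hnd Hx; apply NoDup_cons_iff in Hnd as [Ha Hnd].
  intros [<-|Hxl]; [apply Ha, in_or_app; auto|exact (IH Hnd Hx Hxl)].
Qed.

Lemma In_nth_concat {A : Type} (ls : list (list A)) (i : nat) (x : A) :
  (i < length ls)%nat -> In x (nth i ls nil) -> In x (concat ls).
Proof. intros Hi Hx; apply in_concat; exists (nth i ls nil); split; [apply nth_In|]; auto. Qed.

Lemma fold_Rmax_nonneg (l : list R) : 0 <= fold_right Rmax 0 l.
Proof. induction l as [|x l IH]; simpl; [lra|]; eapply Rle_trans; [exact IH|apply Rmax_r]. Qed.

Lemma fold_Rmax_ub (l : list R) (x : R) : In x l -> x <= fold_right Rmax 0 l.
Proof.
  induction l as [|y l IH]; simpl; [tauto|].
  intros [<-|Hx]; [apply Rmax_l|eapply Rle_trans; [apply IH, Hx|apply Rmax_r]].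
Qed.

Lemma fold_Rmax_lub (l : list R) (B : R) :
  0 <= B -> (forall x, In x l -> x <= B) -> fold_right Rmax 0 l <= B.
Proof. induction l as [|y l IH]; simpl; intros HB Hl; [exact HB|apply Rmax_lub; auto]. Qed.

Definition RInt_between (lo : R) (r : R -> R) (a b : R) : Prop :=
  lo * (b - a) <= RInt r a b <= b - a.

Definition rate_between (lo : R) (r : R -> R) : Prop :=
  forall a b, 0 <= a <= b -> RInt_between lo r a b.

Lemma RInt_between_Chasles (lo : R) (r : R -> R) (a b c : R) :
  ex_RInt r a b -> ex_RInt r b c ->
  RInt_between lo r a b -> RInt_between lo r b c -> RInt_between lo r a c.
Proof.
  unfold RInt_between; intros Hab Hbc Iab Ibc.
  rewrite <- (RInt_Chasles r a b c Hab Hbc); unfold plus; simpl; lra.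
Qed.

Section PiecewiseConstantRate.

Variables (lo : R) (r : R -> R) (t e : nat -> R).
Hypothesis t_increasing : forall k, t k < t (S k).
Hypothesis e_between : forall k, lo <= e k <= 1.
Hypothesis r_piecewise : forall k x, t k < x <= t (S k) -> r x = e k.

Lemma is_RInt_piece (k : nat) (a b : R) :
  t k <= a <= b -> b <= t (S k) -> is_RInt r a b ((b - a) * e k).
Proof.
  intros Ha Hb.
  apply is_RInt_ext with (fun _ => e k); [|exact (is_RInt_const a b (e k))].
  rewrite Rmin_left, Rmax_right by lra.
  intros x Hx; symmetry; apply r_piecewise; lra.
Qed.

Lemma piecewise_RInt_between (N : nat) : forall (k : nat) (a b : R),
  t k <= a <= b -> b <= t (k + N)%nat ->
  ex_RInt r a b /\ RInt_between lo r a b.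
Proof.
  assert (piece : forall k a b, t k <= a <= b -> b <= t (S k) ->
            ex_RInt r a b /\ RInt_between lo r a b).
  { intros k a b Ha Hb.
    pose proof (is_RInt_piece k a b Ha Hb) as H.
    split; [eexists; exact H|].
    unfold RInt_between; rewrite (is_RInt_unique _ _ _ _ H).
    destruct (e_between k); split; nra. }
  induction N as [|N IH]; intros k a b Ha Hb.
  - rewrite Nat.add_0_r in Hb.
    apply (piece k); [lra|]. specialize (t_increasing k); lra.
  - replace (k + S N)%nat with (S k + N)%nat in Hb by lia.
    destruct (Rle_dec b (t (S k))) as [Hb1|Hb1]; [now apply (piece k)|].
    destruct (Rle_dec (t (S k)) a) as [Ha1|Ha1]; [apply (IH (S k)); lra|].
    destruct (piece k a (t (S k))) as [Ia Ba]; [lra|lra|].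
    destruct (IH (S k) (t (S k)) b) as [Ib Bb]; [lra|lra|].
    split; [exact (ex_RInt_Chasles r a (t (S k)) b Ia Ib)|].
    exact (RInt_between_Chasles lo r a (t (S k)) b Ia Ib Ba Bb).
Qed.

End PiecewiseConstantRate.

Lemma sharing_profile_rate_between (e0 : R) (r : R -> R) :
  sharing_profile e0 r -> rate_between e0 r.
Proof.
  intros [t [e [t0 [t_inc [t_unbounded [e_bounds r_piecewise]]]]]] a b Hab.
  destruct (t_unbounded b) as [K HK].
  apply (piecewise_RInt_between e0 r t e t_inc) with (k := O) (N := K);
    [intros k; specialize (e_bounds k); lra|exact r_piecewise|rewrite t0; lra|simpl; lra].
Qed.

Lemma RInt_classical_rate (a b : R) : RInt classical_rate a b = b - a.
Proof. unfold classical_rate; rewrite RInt_const; unfold scal; simpl; unfold mult; simpl; ring. Qed.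

Lemma classical_rate_between : rate_between 1 classical_rate.
Proof. intros a b _; unfold RInt_between; rewrite RInt_classical_rate; lra. Qed.

Lemma completes_classical_rate (s q : R) :
  0 <= q -> completes classical_rate s q (s + q).
Proof.
  intros Hq; unfold completes; rewrite RInt_classical_rate.
  split; [lra|split; [lra|]].
  intros C' _ HC'; rewrite RInt_classical_rate in HC'; lra.
Qed.

Definition load (p : nat -> R) (l : list nat) : R := fold_right Rplus 0 (map p l).

Lemma load_cons (p : nat -> R) (x : nat) (l : list nat) :
  load p (x :: l) = p x + load p l.
Proof. reflexivity. Qed.

Lemma load_nonneg (p : nat -> R) (l : list nat) :
  (forall j, In j l -> 0 <= p j) -> 0 <= load p l.
Proof.
  induction l as [|j l IH]; simpl; intros Hp; [unfold load; simpl; lra|].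
  rewrite load_cons.
  specialize (IH (fun x h => Hp x (or_intror h))); specialize (Hp j (or_introl eq_refl)).
  lra.
Qed.

Lemma load_ge_In (p : nat -> R) (l : list nat) (j : nat) :
  (forall x, In x l -> 0 <= p x) -> In j l -> p j <= load p l.
Proof.
  induction l as [|x l IH]; simpl; intros Hp Hj; [contradiction|].
  rewrite load_cons.
  assert (0 <= p x) by auto.
  assert (0 <= load p l) by (apply load_nonneg; auto).
  destruct Hj as [<-|Hj]; [lra|].
  assert (p j <= load p l) by auto.
  lra.
Qed.

Section Chains.

Variables (r : R -> R) (p S C : nat -> R).

Lemma noidle_chain_completion_le (lo : R) (l : list nat) (prev : R) (j : nat) :
  rate_between lo r -> (forall x, In x l -> 0 <= p x) -> 0 <= prev ->
  chain true r p S C prev l -> In j l -> lo * (C j - prev) <= load p l.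
Proof.
  intros Hr; revert prev; induction l as [|x l IH]; simpl; intros prev Hp Hprev Hc Hj;
    [contradiction|].
  rewrite load_cons.
  destruct Hc as [HS [[HSC [Hwork _]] Hc]]; subst prev.
  destruct (Hr (S x) (C x)) as [Hlo _]; [lra|]; rewrite Hwork in Hlo.
  assert (0 <= load p l) by (apply load_nonneg; auto).
  destruct Hj as [<-|Hj]; [lra|].
  assert (lo * (C j - C x) <= load p l) by (apply IH; auto; lra).
  lra.
Qed.

Lemma chain_load_le_last (b : bool) (lo : R) (l : list nat) (prev : R) :
  rate_between lo r -> 0 <= prev -> chain b r p S C prev l ->
  prev + load p l <= last (map C l) prev.
Proof.
  intros Hr; revert prev; induction l as [|x l IH]; intros prev Hprev Hc;
    [unfold load; simpl; lra|].
  rewrite load_cons.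
  destruct Hc as [HS [[HSC [Hwork _]] Hc]].
  assert (prev <= S x) by (destruct b; lra).
  destruct (Hr (S x) (C x)) as [_ Hhi]; [lra|]; rewrite Hwork in Hhi.
  assert (C x + load p l <= last (map C l) (C x)) by (apply IH; auto; lra).
  change (last (map C (x :: l)) prev) with (last (C x :: map C l) prev).
  rewrite last_cons_shift; lra.
Qed.

Lemma chain_noidle_idle (l : list nat) (prev : R) :
  chain true r p S C prev l -> chain false r p S C prev l.
Proof.
  revert prev; induction l as [|x l IH]; simpl; auto.
  intros prev [HS [Hx Hc]]; split; [lra|split; [exact Hx|now apply IH]].
Qed.

End Chains.

Lemma chain_ext (b : bool) (r : R -> R) (p S C S' C' : nat -> R) (prev : R) (l : list nat) :
  (forall x, In x l -> S x = S' x /\ C x = C' x) ->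
  chain b r p S C prev l -> chain b r p S' C' prev l.
Proof.
  revert prev; induction l as [|x l IH]; simpl; auto.
  intros prev Hagree [HS [Hx Hc]].
  destruct (Hagree x (or_introl eq_refl)) as [<- <-].
  split; [exact HS|split; [exact Hx|]].
  apply IH; auto.
Qed.

Definition override (A : list nat) (f g : nat -> R) (x : nat) : R :=
  if in_dec Nat.eq_dec x A then f x else g x.

Lemma override_in (A : list nat) (f g : nat -> R) (x : nat) :
  In x A -> override A f g x = f x.
Proof. unfold override; destruct (in_dec Nat.eq_dec x A); tauto. Qed.

Lemma override_notin (A : list nat) (f g : nat -> R) (x : nat) :
  ~ In x A -> override A f g x = g x.
Proof. unfold override; destruct (in_dec Nat.eq_dec x A); tauto. Qed.

Lemma classical_chain_exists (p : nat -> R) (l : list nat) (prev : R) :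
  NoDup l -> (forall x, In x l -> 0 <= p x) ->
  exists S C, chain true classical_rate p S C prev l.
Proof.
  revert prev; induction l as [|x l IH]; intros prev Hnd Hp.
  { exists (fun _ => 0), (fun _ => 0); exact I. }
  apply NoDup_cons_iff in Hnd as [Hx Hnd].
  destruct (IH (prev + p x) Hnd (fun y h => Hp y (or_intror h))) as [S' [C' Hc]].
  exists (override (x :: nil) (fun _ => prev) S'),
    (override (x :: nil) (fun _ => prev + p x) C').
  simpl; rewrite !override_in by now left.
  split; [reflexivity|split].
  - apply completes_classical_rate, Hp; now left.
  - apply chain_ext with S' C'; [|exact Hc].
    intros y Hy; rewrite !override_notin; [auto| |];
      intros [<-|[]]; contradiction.
Qed.

Lemma classical_chains_exist (p : nat -> R) (ls : list (list nat)) :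
  NoDup (concat ls) -> (forall x, In x (concat ls) -> 0 <= p x) ->
  exists S C, forall i, (i < length ls)%nat ->
    chain true classical_rate p S C 0 (nth i ls nil).
Proof.
  induction ls as [|l ls IH]; simpl; intros Hnd Hp.
  { exists (fun _ => 0), (fun _ => 0); intros i Hi; lia. }
  destruct (IH (NoDup_app_remove_l _ _ Hnd) (fun x h => Hp x (in_or_app _ _ _ (or_intror h))))
    as [S1 [C1 Hc1]].
  destruct (classical_chain_exists p l 0 (NoDup_app_remove_r _ _ Hnd)
              (fun x h => Hp x (in_or_app _ _ _ (or_introl h)))) as [S2 [C2 Hc2]].
  exists (override l S2 S1), (override l C2 C1).
  intros [|i] Hi; simpl.
  - apply chain_ext with S2 C2; [|exact Hc2].
    intros x Hx; rewrite !override_in; auto.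
  - apply chain_ext with S1 C1; [|apply Hc1; lia].
    intros x Hx.
    assert (Hxl : ~ In x l) by (apply (NoDup_app_notin_l l (concat ls)); auto;
                                apply (In_nth_concat ls i); auto; lia).
    rewrite !override_notin; auto.
Qed.

Lemma makespan_nonneg (n : nat) (C : nat -> R) : 0 <= makespan n C.
Proof. apply fold_Rmax_nonneg. Qed.

Lemma makespan_ub (n : nat) (C : nat -> R) (j : nat) : (j < n)%nat -> C j <= makespan n C.
Proof. intros Hj; apply fold_Rmax_ub, in_map, in_seq; lia. Qed.

Lemma makespan_lub (n : nat) (C : nat -> R) (B : R) :
  0 <= B -> (forall j, (j < n)%nat -> C j <= B) -> makespan n C <= B.
Proof.
  intros HB HC; apply fold_Rmax_lub; [exact HB|].
  intros x Hx; apply in_map_iff in Hx as [j [<- Hj]]; apply in_seq in Hj; apply HC; lia.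
Qed.

Section Assignments.

Variables (m n : nat) (asg : list (list nat)).
Hypothesis asg_assignment : assignment m n asg.

Lemma assignment_NoDup : NoDup (concat asg).
Proof.
  destruct asg_assignment as [_ Hperm].
  apply (Permutation_NoDup (Permutation_sym Hperm)), seq_NoDup.
Qed.

Lemma assignment_job_lt (i j : nat) : (i < m)%nat -> In j (nth i asg nil) -> (j < n)%nat.
Proof.
  destruct asg_assignment as [Hlen Hperm]; intros Hi Hj.
  apply (In_nth_concat asg i j) in Hj; [|lia].
  apply (Permutation_in _ Hperm), in_seq in Hj; lia.
Qed.

Lemma assignment_job_machine (j : nat) :
  (j < n)%nat -> exists i, (i < m)%nat /\ In j (nth i asg nil).
Proof.
  destruct asg_assignment as [Hlen Hperm]; intros Hj.
  assert (Hin : In j (concat asg))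
    by (apply (Permutation_in _ (Permutation_sym Hperm)), in_seq; lia).
  apply in_concat in Hin as [l [Hl Hjl]].
  destruct (In_nth _ _ nil Hl) as [i [Hi <-]].
  exists i; split; [lia|exact Hjl].
Qed.

End Assignments.

Section Schedules.

Variables (m n : nat) (p : nat -> R).
Hypothesis p_nonneg : forall j, (j < n)%nat -> 0 <= p j.

Lemma schedule_noidle_idle (rates : nat -> R -> R) (asg : list (list nat)) (S C : nat -> R) :
  schedule true m n p rates asg S C -> schedule false m n p rates asg S C.
Proof. intros [Ha Hc]; split; [exact Ha|intros i Hi; apply chain_noidle_idle, Hc, Hi]. Qed.

Lemma classical_schedule_exists (asg : list (list nat)) :
  assignment m n asg -> exists S C, schedule true m n p (fun _ => classical_rate) asg S C.
Proof.
  intros Ha.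
  assert (Hp : forall x, In x (concat asg) -> 0 <= p x).
  { intros x Hx; apply in_concat in Hx as [l [Hl Hxl]].
    destruct (In_nth _ _ nil Hl) as [i [Hi <-]].
    apply p_nonneg, (assignment_job_lt m n asg Ha i); [destruct Ha; lia|exact Hxl]. }
  destruct (classical_chains_exist p asg (assignment_NoDup m n asg Ha) Hp) as [S [C Hc]].
  exists S, C; split; [exact Ha|].
  intros i Hi; apply Hc; destruct Ha; lia.
Qed.

Lemma load_le_makespan (b : bool) (lo : R) (rates : nat -> R -> R)
    (asg : list (list nat)) (S C : nat -> R) (i : nat) :
  (forall i, (i < m)%nat -> rate_between lo (rates i)) ->
  schedule b m n p rates asg S C -> (i < m)%nat ->
  load p (nth i asg nil) <= makespan n C.
Proof.
  intros Hr [Ha Hc] Hi.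
  pose proof (chain_load_le_last (rates i) p S C b lo (nth i asg nil) 0
                (Hr i Hi) (Rle_refl 0) (Hc i Hi)) as Hlast.
  destruct (last_In_cons 0 (map C (nth i asg nil))) as [Hz|Hx].
  - rewrite <- Hz in Hlast; pose proof (makespan_nonneg n C); lra.
  - apply in_map_iff in Hx as [j [HCj Hj]]; rewrite <- HCj in Hlast.
    pose proof (makespan_ub n C j (assignment_job_lt m n asg Ha i j Hi Hj)); lra.
Qed.

Lemma noidle_makespan_le_loads (lo : R) (rates : nat -> R -> R)
    (asg : list (list nat)) (S C : nat -> R) (B : R) :
  0 < lo -> (forall i, (i < m)%nat -> rate_between lo (rates i)) ->
  schedule true m n p rates asg S C -> 0 <= B ->
  (forall i, (i < m)%nat -> load p (nth i asg nil) <= B) ->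
  lo * makespan n C <= B.
Proof.
  intros Hlo Hr [Ha Hc] HB Hload.
  replace B with (lo * (B / lo)) by (field; lra).
  apply Rmult_le_compat_l; [lra|].
  apply makespan_lub; [apply Rdiv_le_0_compat; lra|].
  intros j Hj; destruct (assignment_job_machine m n asg Ha j Hj) as [i [Hi Hji]].
  assert (Hjob : lo * (C j - 0) <= load p (nth i asg nil)).
  { apply (noidle_chain_completion_le (rates i) p S C lo); auto; [|lra].
    intros x Hx; apply p_nonneg, (assignment_job_lt m n asg Ha i x Hi Hx). }
  specialize (Hload i Hi).
  apply Rmult_le_reg_l with lo; [exact Hlo|].
  replace (lo * (B / lo)) with B by (field; lra); lra.
Qed.

Lemma noidle_makespan_le (b : bool) (lo lo' : R) (rates rates' : nat -> R -> R)
    (asg : list (list nat)) (S C S' C' : nat -> R) :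
  0 < lo -> (forall i, (i < m)%nat -> rate_between lo (rates i)) ->
  (forall i, (i < m)%nat -> rate_between lo' (rates' i)) ->
  schedule true m n p rates asg S C -> schedule b m n p rates' asg S' C' ->
  lo * makespan n C <= makespan n C'.
Proof.
  intros Hlo Hr Hr' Hs Hs'.
  apply (noidle_makespan_le_loads lo rates asg S C); auto; [apply makespan_nonneg|].
  intros i Hi; exact (load_le_makespan b lo' rates' asg S' C' i Hr' Hs' Hi).
Qed.

Lemma makespan_pos (b : bool) (lo : R) (rates : nat -> R -> R)
    (asg : list (list nat)) (S C : nat -> R) (j : nat) :
  (forall i, (i < m)%nat -> rate_between lo (rates i)) ->
  schedule b m n p rates asg S C -> (j < n)%nat -> 0 < p j -> 0 < makespan n C.
Proof.
  intros Hr Hs Hj Hpj.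
  destruct (assignment_job_machine m n asg (proj1 Hs) j Hj) as [i [Hi Hji]].
  pose proof (load_le_makespan b lo rates asg S C i Hr Hs Hi).
  assert (p j <= load p (nth i asg nil)); [|lra].
  apply load_ge_In; [|exact Hji].
  intros x Hx; apply p_nonneg, (assignment_job_lt m n asg (proj1 Hs) i x Hi Hx).
Qed.

End Schedules.

Theorem mainTheorem2
  (m : nat) (e0 alpha : R)
  (A : nat -> (nat -> R) -> list (list nat)) :
  (1 <= m)%nat ->
  0 < e0 <= 1 ->
  (* A is an alpha-approximation algorithm for P_m || C_max *)
  (forall (n : nat) (p : nat -> R),
     (forall j, (j < n)%nat -> 0 < p j) ->
     assignment m n (A n p) /\
     (forall S C, schedule true m n p (fun _ => classical_rate) (A n p) S C ->
      forall asg' S' C', schedule false m n p (fun _ => classical_rate) asg' S' C' ->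
      makespan n C <= alpha * makespan n C')) ->
  (* then using its schedule is an alpha/e0-approximation for
     P_m, e_{i,k} >= e0 || C_max *)
  forall (n : nat) (p : nat -> R) (rates : nat -> R -> R),
    (forall j, (j < n)%nat -> 0 < p j) ->
    (forall i, (i < m)%nat -> sharing_profile e0 (rates i)) ->
    forall S C, schedule true m n p rates (A n p) S C ->
    forall asg' S' C', schedule false m n p rates asg' S' C' ->
    makespan n C <= alpha / e0 * makespan n C'.
Proof.
  intros _ He0 HA n p rates Hp Hrates S C Hs asg' S' C' Hs'.
  destruct (Nat.eq_dec n 0) as [->|Hn].
  { unfold makespan; simpl; rewrite Rmult_0_r; lra. }
  assert (Hp0 : forall j, (j < n)%nat -> 0 <= p j) by (intros j Hj; apply Rlt_le, Hp, Hj).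
  assert (Hsharing : forall i, (i < m)%nat -> rate_between e0 (rates i))
    by (intros i Hi; apply sharing_profile_rate_between, Hrates, Hi).
  assert (Hclassical : forall i : nat, (i < m)%nat -> rate_between 1 classical_rate)
    by (intros; apply classical_rate_between).
  destruct (HA n p Hp) as [HAasg HAapprox].
  destruct (classical_schedule_exists m n p Hp0 (A n p) HAasg) as [S1 [C1 Hs1]].
  destruct (classical_schedule_exists m n p Hp0 asg' (proj1 Hs')) as [S2 [C2 Hs2]].
  assert (Hsharing_A : e0 * makespan n C <= makespan n C1)
    by exact (noidle_makespan_le m n p Hp0 true e0 1 rates (fun _ => classical_rate)
                (A n p) S C S1 C1 (proj1 He0) Hsharing Hclassical Hs Hs1).
  assert (Happrox : makespan n C1 <= alpha * makespan n C2)
    by exact (HAapprox S1 C1 Hs1 asg' S2 C2 (schedule_noidle_idle m n p _ _ _ _ Hs2)).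
  assert (Hcompetitor : 1 * makespan n C2 <= makespan n C')
    by exact (noidle_makespan_le m n p Hp0 false 1 e0 (fun _ => classical_rate) rates
                asg' S2 C2 S' C' Rlt_0_1 Hclassical Hsharing Hs2 Hs').
  assert (HC1 : 0 < makespan n C1)
    by (apply (makespan_pos m n p Hp0 true 1 (fun _ => classical_rate) (A n p) S1 C1 0
                 Hclassical Hs1); [|apply Hp]; lia).
  pose proof (makespan_nonneg n C2).
  (* Hcompetitor may only be multiplied by alpha because there is at least one job *)
  assert (Halpha : 0 < alpha) by nra.
  apply Rmult_le_reg_l with e0; [lra|].
  replace (e0 * (alpha / e0 * makespan n C')) with (alpha * makespan n C') by (field; lra).
  nra.
Qed.
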